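(* Consider a Robust Logical-Dynamical Chain consisting of $N \ge 1$ operators $o_1,\dots,o_N$ with goal condition $L_G$, executed as described in the context. Suppose that there is a constant $p>0$ such that every operator $o_i$ induces a controlled transition with probability $p_i \ge p$, regardless of the history of the execution. Then, with probability $1$, the execution eventually reaches a state satisfying $L_G$. Moreover, this convergence is exponential in the number $k$ of uncontrolled transitions: the probability that $L_G$ is reached after at most $k$ uncontrolled transitions is at least $1-(1-p^N)^{k+1}$. Finally, the expected total number $T$ of transitions (controlled and uncontrolled) made before $L_G$ is reached satisfies $E[T] \le N/p^N$.
   Context: Let $\mathcal{S}$ be the joint continuous–logical state space (a continuous world state $x$ together with the vector of truth values of all grounded logical predicates evaluated at $x$). A logical condition $L$ is a Boolean function on $\mathcal{S}$, identified with the set of states where it is true; $L_1 \Rightarrow L_2$ means $L_1 \subseteq L_2$. An operator is a tuple $o=(L_P,L_R,L_E,\pi)$, where $L_P$ is the entry condition (the operator may be entered when $L_P$ holds), $L_R$ is the run condition (an already-entered operator may keep running while $L_R$ holds), $L_E$ is the expected effect, and $\pi:\mathcal{S}\to\mathcal{U}$ is a control policy. The system evolves under Markov dynamics $s_{t+1}=f(s_t,\pi(s_t))$, possibly stochastic and subject to perturbations. A Robust Logical-Dynamical Chain (RLDC) is a sequence of operators $o_1,\dots,o_N$ such that $L_E^i \Rightarrow L_P^{i+1} \Rightarrow L_R^{i+1}$ for each $i$. Its goal condition $L_G$ is the effect reached by completing the last operator, $L_G = L_E^N$. Execution rule: at every time step, the system enters the most downstream (largest-index) operator whose entry condition holds.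 If the state stops satisfying the run condition of the current operator, it switches to the most downstream operator that can be entered. Otherwise it keeps running the current operator's policy. While operator $o_i$ is running, its policy produces a sequence of states. This run either ends in a state satisfying $L_E^i$ with $L_R^i$ held throughout, which is called a controlled transition: the system then advances to $o_{i+1}$, or reaches $L_G$ if $i=N$. Otherwise the run ends in a state violating $L_R^i$, which is called an uncontrolled transition: the system then jumps to some operator (possibly an earlier one, in the worst case $o_1$) or possibly to the goal. ''Operator $o_i$ induces a controlled transition with probability $p_i$'' means that each run of $o_i$ ends in a controlled transition with probability $p_i$. A transition means one such termination of an operator run, controlled or uncontrolled. *)

From HB Require Import structures.
From mathcomp Require Import all_boot all_order all_algebra.
From mathcomp Require Import all_classical all_reals all_analysis.
Set Implicit Arguments. Unset Strict Implicit. Unset Printing Implicit Defensive.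
Import Order.TTheory GRing.Theory Num.Theory.
Local Open Scope classical_set_scope.
Local Open Scope ring_scope.

(* Operators o_1..o_N are indexed by 'I_N (o_{i+1} is index i).
   A "mode" is [Some i] (operator o_{i+1} is running) or [None]
   (the goal condition L_G has been reached). *)

Definition next_op (N : nat) (i : 'I_N) : option 'I_N := insub i.+1.

(* Event: the discrete execution history up to transition n is (x, c):
   modes X_0..X_n equal x_0..x_n and the kinds (controlled = true)
   of transitions 0..n-1 equal c_0..c_{n-1}. *)
Definition history_event (T : Type) (N : nat)
    (X : nat -> T -> option 'I_N) (C : nat -> T -> bool)
    (n : nat) (x : nat -> option 'I_N) (c : nat -> bool) : set T :=
  [set w | forall m, (m <= n)%N -> X m w = x m /\ ((m < n)%N -> C m w = c m)].

Definition unc_count (T : Type) (C : nat -> T -> bool) (n : nat) (w : T) : nat :=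
  count (fun m => ~~ C m w) (iota 0 n).

(* Number of transitions made before L_G is reached (+oo if never). *)
Definition hitting_time (R : realType) (T : Type) (N : nat)
    (X : nat -> T -> option 'I_N) (w : T) : \bar R :=
  ereal_inf [set (n%:R)%:E | n in [set n : nat | X n w = None]].

From HB Require Import structures.
From mathcomp Require Import all_boot all_order all_algebra.
From mathcomp Require Import all_classical all_reals all_analysis.
From mathcomp Require Import ring lra.
Import Order.TTheory GRing.Theory Num.Theory.
Local Open Scope classical_set_scope.
Local Open Scope ring_scope.
Set Implicit Arguments. Unset Strict Implicit. Unset Printing Implicit Defensive.

(* Whatever the history, the running operator makes a controlled transition
   with probability at least p, and N consecutive controlled transitions lead
   from any operator to L_G.  Events depending only on the finitely many
   possible histories up to time n are finite unions of history events, so the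
   hypothesis yields P(E and the next transition is controlled) >= p P(E) for
   all of them.  Iterating this N times, L_G is missed during N consecutive
   transitions with probability at most 1 - p^N, whence P(T > jN) <= (1 - p^N)^j:
   L_G is reached almost surely and E[T] = sum_t P(T > t) <= N / p^N.  For the
   bound in k, an uncontrolled transition leaves the execution at most N
   controlled transitions away from L_G; induction on k and on that distance r
   bounds the probability of missing L_G with at most k uncontrolled
   transitions by (1 - p^r)(1 - p^N)^k. *)

Section real_probability.
Context d (T : measurableType d) (R : realType) (P : probability T R).
Implicit Types A B : set T.

Definition prob A : R := fine (P A).

Lemma probE A : measurable A -> P A = (prob A)%:E.
Proof. by move=> mA; rewrite /prob fineK // fin_num_measure. Qed.

Lemma prob_ge0 A : 0 <= prob A.
Proof. exact: fine_ge0. Qed.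

Lemma le_prob A B : measurable A -> measurable B -> A `<=` B -> prob A <= prob B.
Proof. by move=> mA mB AB; rewrite -lee_fin -!probE // le_measure // inE. Qed.

Lemma probT : prob setT = 1.
Proof. by rewrite /prob probability_setT. Qed.

Lemma prob0 : prob set0 = 0.
Proof. by rewrite /prob measure0. Qed.

Lemma prob_le1 A : measurable A -> prob A <= 1.
Proof. by move=> mA; rewrite -probT le_prob. Qed.

Lemma probU A B : measurable A -> measurable B -> A `&` B = set0 ->
  prob (A `|` B) = prob A + prob B.
Proof.
by move=> mA mB AB; rewrite /prob measureU // fineD // fin_num_measure.
Qed.

Lemma prob_setID A B : measurable A -> measurable B ->
  prob A = prob (A `&` B) + prob (A `&` ~` B).
Proof.
move=> mA mB; rewrite -probU; last 3 first.
- exact: measurableI.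
- exact/measurableI/measurableC.
- by rewrite setIACA setICr setI0.
by rewrite -setIUr setUCr setIT.
Qed.

Section finite_partition.
Variables (V : finType) (f : T -> V).
Hypothesis mf : forall v, measurable (f @^-1` [set v]).

Lemma measurable_fin_preimage (B : set V) : measurable (f @^-1` B).
Proof.
rewrite (_ : f @^-1` B = \bigcup_(v in B) f @^-1` [set v]).
  by apply: fin_bigcup_measurable => //; exact: finite_finset.
by apply/seteqP; split => [w Bw|w [v Bv /= ->]] //; exists (f w).
Qed.

Lemma prob_fibers_seq A (s : seq V) : measurable A -> uniq s ->
  prob (A `&` f @^-1` [set v | v \in s]) =
  \sum_(v <- s) prob (A `&` f @^-1` [set v]).
Proof.
move=> mA; elim: s => [_|v s IH /andP[vs us]].
  by rewrite big_nil -prob0; congr prob; apply/seteqP; split => w [].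
rewrite big_cons -IH // -probU; last 3 first.
- exact/measurableI/measurable_fin_preimage.
- exact/measurableI/measurable_fin_preimage.
- by apply/seteqP; split => w // [[_ /= ->]] [_]; rewrite (negbTE vs).
congr prob; rewrite -setIUr; congr (_ `&` _); apply/seteqP.
split => w /=; rewrite in_cons; first by case/orP => [/eqP|]; auto.
by case=> [->|->]; rewrite ?eqxx ?orbT.
Qed.

Lemma prob_sum_fibers A : measurable A ->
  prob A = \sum_(v : V) prob (A `&` f @^-1` [set v]).
Proof.
move=> mA; rewrite -prob_fibers_seq ?index_enum_uniq //; congr prob.
by apply/seteqP; split => [w Aw|w []] //; split => //=; rewrite mem_index_enum.
Qed.

Lemma le_prob_fibers (c : R) A B : measurable A -> measurable B ->
  (forall v, c * prob (A `&` f @^-1` [set v]) <= prob (B `&` f @^-1` [set v])) ->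
  c * prob A <= prob B.
Proof.
move=> mA mB cAB; rewrite (prob_sum_fibers mA) (prob_sum_fibers mB) mulr_sumr.
exact: ler_sum.
Qed.

End finite_partition.
End real_probability.

Lemma le0_of_le_expr (R : archiRealFieldType) (q x : R) : 0 < q -> q <= 1 ->
  (forall j, x <= (1 - q) ^+ j) -> x <= 0.
Proof.
move=> q_gt0 q_le1 xq; apply: (cvgr_to_ge (cvg_expr _)); last exact: nearW.
by rewrite ger0_norm ?subr_ge0 // ltrBlDr ltrDl.
Qed.

Lemma mulr_geometric_sum (R : comRingType) (q : R) j :
  q * \sum_(i < j) (1 - q) ^+ i = 1 - (1 - q) ^+ j.
Proof. by rewrite -[RHS]opprB subrX1; ring. Qed.

Section execution.
Context d (Omega : measurableType d) (R : realType) (P : probability Omega R)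
  (N : nat) (p : R) (X : nat -> Omega -> option 'I_N) (C : nat -> Omega -> bool).
Hypotheses (p_gt0 : 0 < p) (p_le1 : p <= 1).
Hypothesis mX : forall n o, measurable (X n @^-1` [set o]).
Hypothesis mC : forall n, measurable [set w | C n w].
Hypothesis goal_absorbing : forall n w, X n w = None -> X n.+1 w = None.
Hypothesis controlled_next :
  forall n w i, X n w = Some i -> C n w -> X n.+1 w = next_op i.
Hypothesis controlled_prob : forall n x c i, x n = Some i ->
  (p%:E * P (history_event X C n x c)
     <= P (history_event X C n x c `&` [set w | C n w]))%E.

Local Notation prob := (prob P).

Lemma measurable_C_eq n b : measurable [set w | C n w = b].
Proof.
case: b; first exact: mC.
rewrite (_ : [set w | _] = ~` [set w | C n w]); first exact: measurableC.
by apply/seteqP; split => w /=; case: (C n w).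
Qed.

Definition history n w : {ffun 'I_n.+1 -> option 'I_N} * {ffun 'I_n -> bool} :=
  ([ffun k : 'I_n.+1 => X k w], [ffun k : 'I_n => C k w]).

Lemma history_eqP n w w' : history n w = history n w' <->
  (forall m, (m <= n)%N -> X m w = X m w') /\
  (forall m, (m < n)%N -> C m w = C m w').
Proof.
split => [[/ffunP eqX /ffunP eqC]|[eqX eqC]].
  split => [m mn|m mn].
    by have := eqX (Ordinal (mn : (m < n.+1)%N)); rewrite !ffunE.
  by have := eqC (Ordinal mn); rewrite !ffunE.
congr pair; apply/ffunP => k; rewrite !ffunE.
- exact: eqX (ltn_ord k).
- exact: eqC (ltn_ord k).
Qed.

Lemma history_fiberE n w :
  history n @^-1` [set history n w] = history_event X C n (X^~ w) (C^~ w).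
Proof.
apply/seteqP; split => w' /=.
  by case/history_eqP => eqX eqC m mn; split => [|/eqC]; rewrite ?eqX.
move=> hw; apply/history_eqP; split => m mn.
  by have [] := hw m mn.
by have [_ ->] := hw m (ltnW mn).
Qed.

Lemma measurable_history n h : measurable (history n @^-1` [set h]).
Proof.
rewrite (_ : _ @^-1` _ = \bigcap_(k in [set: 'I_n.+1]) X k @^-1` [set h.1 k]
                     `&` \bigcap_(k in [set: 'I_n]) [set w | C k w = h.2 k]).
  apply: measurableI; apply: fin_bigcap_measurable => [|k _];
    by [exact: finite_finset | exact: mX | exact: measurable_C_eq].
apply/seteqP; split => w /=.
  by move=> <-; split => k _ /=; rewrite ffunE.
case: h => hX hC /= [eqX eqC]; congr pair; apply/ffunP => k; rewrite ffunE.
- exact: eqX.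
- exact: eqC.
Qed.

Definition determined n (E : set Omega) :=
  forall w w', history n w = history n w' -> E w -> E w'.

Lemma determined_measurable n E : determined n E -> measurable E.
Proof.
move=> dE; rewrite (_ : E = history n @^-1` (history n @` E)).
  exact/measurable_fin_preimage/measurable_history.
apply/seteqP; split => [w Ew|w [w' Ew' /dE]]; last exact.
by exists w.
Qed.

Lemma determinedI n E F :
  determined n E -> determined n F -> determined n (E `&` F).
Proof. by move=> dE dF w w' ww' [/(dE _ _ ww') ? /(dF _ _ ww') ?]. Qed.

Lemma determinedC n E : determined n E -> determined n (~` E).
Proof. by move=> dE w w' ww' nEw Ew'; apply/nEw/(dE w')/Ew'. Qed.

Lemma determinedS n E : determined n E -> determined n.+1 E.
Proof.
move=> dE w w' /history_eqP[eqX eqC]; apply: dE; apply/history_eqP.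
by split=> m mn; [apply: eqX; exact: leqW | apply: eqC; exact: ltnW].
Qed.

Lemma determined_X n o : determined n [set w | X n w = o].
Proof. by move=> w w' /history_eqP[eqX _] /= <-; rewrite eqX. Qed.

Definition progress n := [set w | X n w = None \/ C n w].

Lemma determined_progress n : determined n.+1 (progress n).
Proof.
by move=> w w' /history_eqP[eqX eqC]; rewrite /progress /= eqX ?eqC.
Qed.

Lemma determined_progressI n E :
  determined n E -> determined n.+1 (E `&` progress n).
Proof.
by move=> dE; apply: determinedI; [exact: determinedS | exact: determined_progress].
Qed.

Lemma determined_progressCI n E :
  determined n E -> determined n.+1 (E `&` ~` progress n).
Proof.
move=> dE; apply: determinedI; first exact: determinedS.
exact/determinedC/determined_progress.
Qed.

Lemma measurable_progress n : measurable (progress n).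
Proof. by apply: determined_measurable; exact: determined_progress. Qed.

Lemma prob_progress_history n w (H := history_event X C n (X^~ w) (C^~ w)) :
  p * prob H <= prob (H `&` progress n).
Proof.
have mH : measurable H.
  by rewrite /H -history_fiberE; exact: measurable_history.
case Xw: (X n w) => [i|].
  have := @controlled_prob n (X^~ w) (C^~ w) i Xw; rewrite -/H.
  rewrite !probE //; last exact/measurableI/mC.
  rewrite -EFinM lee_fin => /le_trans; apply; apply: le_prob.
  - exact/measurableI/mC.
  - exact/measurableI/measurable_progress.
  by move=> w' [Hw' Cw']; split => //; right.
rewrite (_ : H `&` _ = H); first by rewrite ler_piMl ?prob_ge0.
apply/seteqP; split => [w' []//|w' Hw']; split => //; left.
by have [-> _] := Hw' n (leqnn n).
Qed.

Lemma prob_progress n E : determined n E -> p * prob E <= prob (E `&` progress n).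
Proof.
move=> dE; have mE := determined_measurable dE.
apply: (le_prob_fibers (f := history n)) => //.
- exact: measurable_history.
- exact/measurableI/measurable_progress.
move=> h; have [[w Ew <-]|nEh] := pselect (exists2 w, E w & history n w = h).
  have EH : E `&` history n @^-1` [set history n w] = history n @^-1` [set history n w].
    by apply/seteqP; split => [w' []//|w' /= ww']; split => //; apply: (dE w).
  rewrite EH setIAC EH history_fiberE; exact: prob_progress_history.
rewrite (_ : E `&` _ = set0) ?prob0 ?mulr0 ?prob_ge0 //.
by apply/seteqP; split => w // [Ew hw]; apply: nEh; exists w.
Qed.

Let pN_gt0 : 0 < p ^+ N. Proof. exact: exprn_gt0. Qed.
Let pN_le1 : p ^+ N <= 1. Proof. exact/exprn_ile1/p_le1/ltW. Qed.

Definition at_goal t := [set w | X t w = None].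

Lemma measurable_at_goal t : measurable (at_goal t).
Proof. exact: mX. Qed.

Lemma at_goal_mono s t : (s <= t)%N -> at_goal s `<=` at_goal t.
Proof.
by move=> /subnK <- w; elim: (t - s)%N => // k IH /IH; exact: goal_absorbing.
Qed.

(* Operator [o_(i+1)] is [Some i]; it needs [N - i] controlled transitions. *)
Definition steps_to_goal (o : option 'I_N) : nat :=
  if o is Some i then (N - i)%N else 0%N.

Lemma steps_to_goal_le o : (steps_to_goal o <= N)%N.
Proof. by case: o => [i|] //=; exact: leq_subr. Qed.

Lemma steps_to_goal0 o : (steps_to_goal o <= 0)%N -> o = None.
Proof. by case: o => [i|] //=; rewrite leqn0 subn_eq0 leqNgt ltn_ord. Qed.

Lemma steps_to_goal_progress n w r : (steps_to_goal (X n w) <= r.+1)%N ->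
  progress n w -> (steps_to_goal (X n.+1 w) <= r)%N.
Proof.
case Xw: (X n w) => [i|] /= stw; last by rewrite goal_absorbing.
case=> [|Cw]; first by rewrite Xw.
rewrite (controlled_next Xw Cw) /next_op; case: insubP => [j _ /= ->|] //.
by rewrite subnS -subn1 leq_subLR add1n.
Qed.

Lemma prob_at_goal_within r n E : determined n E ->
  (forall w, E w -> (steps_to_goal (X n w) <= r)%N) ->
  p ^+ r * prob E <= prob (E `&` at_goal (n + r)).
Proof.
elim: r n E => [|r IH] n E dE stE.
  rewrite expr0 mul1r addn0 (_ : _ `&` _ = E) //.
  by apply/seteqP; split => [w []//|w Ew]; split => //; exact/steps_to_goal0/stE.
have mE := determined_measurable dE.
have reach : p ^+ r * prob (E `&` progress n)
    <= prob (E `&` progress n `&` at_goal (n + r.+1)).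
  rewrite -addSnnS; apply: IH => [|w [Ew]]; first exact: determined_progressI.
  exact: steps_to_goal_progress (stE w Ew).
rewrite exprSr -mulrA; apply: le_trans (ler_wpM2l _ (prob_progress dE)) _.
  exact/exprn_ge0/ltW.
apply: le_trans reach _; apply: le_prob => [||w [[]]//].
- exact/measurableI/measurable_at_goal/measurableI/measurable_progress.
- exact/measurableI/measurable_at_goal.
Qed.

Lemma prob_not_at_goal_block j : prob (~` at_goal (j * N)) <= (1 - p ^+ N) ^+ j.
Proof.
elim: j => [|j IH].
  by rewrite expr0 prob_le1 //; exact/measurableC/measurable_at_goal.
set E := ~` at_goal (j * N).
have dE : determined (j * N) E by exact/determinedC/determined_X.
have mE := determined_measurable dE.
have reach := prob_at_goal_within dE (fun w _ => steps_to_goal_le (X _ w)).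
have -> : ~` at_goal (j.+1 * N) = E `&` ~` at_goal (j * N + N).
  rewrite mulSnr; apply/seteqP; split => [w nX|w [_ //]].
  by split => // XjN; apply/nX/(at_goal_mono (leq_addr N (j * N))).
have := prob_setID P mE (measurable_at_goal (j * N + N)).
rewrite exprS => splitE; apply: (@le_trans _ _ ((1 - p ^+ N) * prob E)); first lra.
by apply: ler_wpM2l IH; rewrite subr_ge0.
Qed.

Lemma prob_eventually_at_goal : P [set w | exists n, X n w = None] = 1%E.
Proof.
have -> : [set w | exists n, X n w = None] = \bigcup_n at_goal n.
  by apply/seteqP; split => [w [n ?]|w [n _ ?]]; exists n.
have mU : measurable (\bigcup_n at_goal n).
  exact/bigcupT_measurable/measurable_at_goal.
have never0 : prob (~` \bigcup_n at_goal n) <= 0.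
  apply: le0_of_le_expr pN_gt0 pN_le1 _ => j.
  apply: le_trans (prob_not_at_goal_block j).
  apply: le_prob => [||w nU XjN]; [exact: measurableC | exact/measurableC/mX |].
  by apply: nU; exists (j * N)%N.
rewrite probE //; congr EFin.
have := prob_setID P measurableT mU; rewrite !setTI probT.
have := prob_ge0 P (~` \bigcup_n at_goal n); lra.
Qed.

Definition uncontrolled_from n m w := count (fun t => ~~ C t w) (iota n m).

Definition reach_goal_unc n k :=
  [set w | exists m, X (n + m) w = None /\ (uncontrolled_from n m w <= k)%N].

Lemma determined_uncontrolled_le n m k :
  determined (n + m) [set w | (uncontrolled_from n m w <= k)%N].
Proof.
move=> w w' /history_eqP[_ eqC] /=.
suff -> : uncontrolled_from n m w' = uncontrolled_from n m w by [].
by apply: eq_in_count => t; rewrite mem_iota => /andP[_ /eqC] /= ->.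
Qed.

Lemma measurable_reach_goal_unc n k : measurable (reach_goal_unc n k).
Proof.
rewrite (_ : reach_goal_unc n k = \bigcup_m
    (at_goal (n + m) `&` [set w | (uncontrolled_from n m w <= k)%N])).
  apply/bigcupT_measurable => m; apply/measurableI; first exact: measurable_at_goal.
  exact/determined_measurable/determined_uncontrolled_le.
by apply/seteqP; split => [w [m ?]|w [m _ ?]]; exists m.
Qed.

Lemma reach_goal_unc_at_goal n k w : X n w = None -> reach_goal_unc n k w.
Proof. by exists 0%N; rewrite addn0. Qed.

Lemma reach_goal_unc_progress n k w :
  progress n w -> reach_goal_unc n.+1 k w -> reach_goal_unc n k w.
Proof.
move=> [/reach_goal_unc_at_goal //|Cw] [m [Xm um]].
by exists m.+1; rewrite -addSnnS /uncontrolled_from /= Cw.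
Qed.

Lemma reach_goal_unc_uncontrolled n k w :
  reach_goal_unc n.+1 k w -> reach_goal_unc n k.+1 w.
Proof.
move=> [m [Xm um]]; exists m.+1; rewrite -addSnnS /uncontrolled_from /=.
by split => //; case: (C n w); rewrite /= ?add1n ?ltnS // ltnW.
Qed.

Section miss_goal.
Variable k : nat.
(* In [prob_miss_goal] this is the induction hypothesis on [k]. *)
Hypothesis prob_miss_uncontrolled : forall n E, determined n E ->
  prob (E `&` ~` progress n `&` ~` reach_goal_unc n k)
    <= (1 - p ^+ N) ^+ k * prob (E `&` ~` progress n).

Lemma prob_miss_goal_rec r n E : determined n E ->
  (forall w, E w -> (steps_to_goal (X n w) <= r)%N) ->
  prob (E `&` ~` reach_goal_unc n k) <= (1 - p ^+ r) * (1 - p ^+ N) ^+ k * prob E.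
Proof.
elim: r n E => [|r IH] n E dE stE.
  rewrite expr0 subrr !mul0r (_ : _ `&` _ = set0) ?prob0 //.
  apply/seteqP; split => w // [Ew]; apply.
  exact/reach_goal_unc_at_goal/steps_to_goal0/stE.
have mE := determined_measurable dE.
have mR := measurable_reach_goal_unc n k.
set B := (1 - p ^+ N) ^+ k.
have miss_progress : prob (E `&` ~` reach_goal_unc n k `&` progress n)
    <= (1 - p ^+ r) * B * prob (E `&` progress n).
  apply: le_trans (IH n.+1 _ _ _); last 2 first.
  - exact: determined_progressI.
  - by move=> w [Ew]; exact: steps_to_goal_progress (stE w Ew).
  apply: le_prob => [|| w [[Ew nR] pw]].
  - exact/measurableI/measurable_progress/measurableI/measurableC.
  - apply/measurableI/measurableC/measurable_reach_goal_unc.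
    exact/measurableI/measurable_progress.
  by split => // /(reach_goal_unc_progress pw).
have miss_unc : prob (E `&` ~` reach_goal_unc n k `&` ~` progress n)
    <= B * prob (E `&` ~` progress n).
  by rewrite setIAC; exact: prob_miss_uncontrolled.
rewrite (prob_setID P (measurableI _ _ mE (measurableC mR)) (measurable_progress n)).
apply: le_trans (lerD miss_progress miss_unc) _.
have splitE := prob_setID P mE (measurable_progress n).
have aB_ge0 : 0 <= p ^+ r * B.
  by apply: mulr_ge0; apply: exprn_ge0; [exact: ltW | rewrite subr_ge0].
(* (1 - p^r) B x1 + B x2 = B (x1 + x2) - p^r B x1, and x1 >= p (x1 + x2). *)
have := ler_wpM2l aB_ge0 (prob_progress dE).
rewrite exprSr splitE; set x1 := prob (E `&` progress n).
set x2 := prob (E `&` ~` progress n); nra.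
Qed.

End miss_goal.

Lemma prob_miss_goal k r n E : determined n E ->
  (forall w, E w -> (steps_to_goal (X n w) <= r)%N) ->
  prob (E `&` ~` reach_goal_unc n k) <= (1 - p ^+ r) * (1 - p ^+ N) ^+ k * prob E.
Proof.
elim: k r n E => [|k IHk]; apply: prob_miss_goal_rec => n E /determined_progressCI dEu;
  have mEu := determined_measurable dEu.
  rewrite expr0 mul1r; apply: le_prob => [||w [] //] //.
  by apply: measurableI => //; exact/measurableC/measurable_reach_goal_unc.
rewrite exprS; apply: le_trans (IHk N n.+1 _ dEu (fun w _ => steps_to_goal_le _)).
apply: le_prob => [|| w [Eu nR]];
  try by apply: measurableI => //; exact/measurableC/measurable_reach_goal_unc.
by split => // /reach_goal_unc_uncontrolled.
Qed.

Lemma prob_reach_goal_unc k : ((1 - (1 - p ^+ N) ^+ k.+1)%:E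
  <= P [set w | exists n, X n w = None /\ (unc_count C n w <= k)%N])%E.
Proof.
have -> : [set w | exists n, X n w = None /\ (unc_count C n w <= k)%N]
    = reach_goal_unc 0 k by [].
have mR := measurable_reach_goal_unc 0 k.
rewrite probE // lee_fin.
have := @prob_miss_goal k N 0 setT _ (fun w _ => steps_to_goal_le (X 0 w)).
have := prob_setID P measurableT mR; rewrite !setTI probT -exprS mulr1.
move=> splitT miss; suff: prob (~` reach_goal_unc 0 k) <= (1 - p ^+ N) ^+ k.+1 by lra.
by apply: miss => w w'.
Qed.

Hypothesis N_gt0 : (0 < N)%N.

Lemma sum_prob_not_at_goal_blocks j :
  \sum_(0 <= t < j * N) prob (~` at_goal t) <= N%:R * \sum_(i < j) (1 - p ^+ N) ^+ i.
Proof.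
elim: j => [|j IH]; first by rewrite mul0n big_geq // big_ord0 mulr0.
rewrite (@big_cat_nat _ _ _ (j * N)) //=; last by rewrite mulSnr leq_addr.
rewrite big_ord_recr /= mulrDr; apply: lerD IH _.
apply: le_trans (ler_sum_nat (G := fun=> (1 - p ^+ N) ^+ j) _) _.
  move=> t /andP[jNt _]; apply: le_trans (prob_not_at_goal_block j).
  apply: le_prob => [||w nX XjN]; try exact/measurableC/measurable_at_goal.
  exact/nX/(at_goal_mono jNt).
by rewrite sumr_const_nat mulSnr addKn mulr_natl.
Qed.

Lemma sum_prob_not_at_goal_le M :
  \sum_(0 <= t < M) prob (~` at_goal t) <= N%:R / p ^+ N.
Proof.
apply: (@le_trans _ _ (\sum_(0 <= t < M * N) prob (~` at_goal t))).
  rewrite (@big_cat_nat _ _ _ M 0 (M * N)) //=; last by rewrite leq_pmulr.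
  by rewrite lerDl sumr_ge0 // => t _; exact: prob_ge0.
apply: le_trans (sum_prob_not_at_goal_blocks M) _; rewrite ler_wpM2l //.
rewrite -(ler_pM2l pN_gt0) mulfV ?gt_eqF // mulr_geometric_sum lerBlDr lerDl.
by rewrite exprn_ge0 // subr_ge0.
Qed.

Lemma hitting_time_series w :
  hitting_time R X w = (\sum_(t <oo) (\1_(~` at_goal t) w : R)%:E)%E.
Proof.
have partial M : (forall t, (t < M)%N -> ~ at_goal t w) ->
    (\sum_(0 <= t < M) (\1_(~` at_goal t) w : R)%:E)%E = (M%:R)%:E.
  move=> before; rewrite (eq_big_nat _ _ (F2 := fun=> 1%E)).
    by rewrite sumEFin sumr_const_nat subn0.
  by move=> t /andP[_ tM]; rewrite indicE mem_set //; exact: before.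
have [reached|never] := pselect (exists h, X h w == None); last first.
  rewrite /hitting_time (_ : [set _ | n in _] = set0) ?ereal_inf0; last first.
    by apply/seteqP; split => y // [n Xn _]; apply: never; exists n; apply/eqP.
  apply/esym/cvg_lim => //; rewrite (_ : (fun _ => _) = fun M => (M%:R)%:E).
    exact/cvgenyP.
  by apply/funext => M; apply: partial => t _ Xt; apply: never; exists t; apply/eqP.
have [h /eqP Xh hmin] := ex_minnP reached.
have before t : (t < h)%N -> ~ at_goal t w.
  by move=> th /eqP /hmin; rewrite leqNgt th.
have -> : hitting_time R X w = (h%:R)%:E.
  apply/eqP; rewrite eq_le; apply/andP; split.
    by apply: ge_ereal_inf; exists (h%:R)%:E => //; exists h.
  by apply/ereal_infP => _ [n /eqP /hmin hn <-]; rewrite lee_fin ler_nat.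
rewrite (@nneseries_split _ _ 0 h) => [|t _]; last by rewrite lee_fin indicE.
rewrite add0n partial // eseries0 ?adde0 // => t ht _.
by rewrite indicE memNset //= => /(_ (at_goal_mono ht Xh)).
Qed.

Lemma expected_hitting_time_le :
  (\int[P]_w hitting_time R X w <= (N%:R / p ^+ N)%:E)%E.
Proof.
under eq_integral do rewrite hitting_time_series.
rewrite integral_nneseries //; last first.
  move=> t; apply/measurable_realfun.measurable_EFinP.
  exact/measurable_realfun.measurable_indic/measurableC/measurable_at_goal.
rewrite (eq_eseriesr (g := fun t => (prob (~` at_goal t))%:E)); last first.
  move=> t _; have mt := measurableC (measurable_at_goal t).
  by rewrite integral_indic // setIT; exact: probE.
apply: lime_le.
  by apply: is_cvg_nneseries => t _ _; rewrite lee_fin prob_ge0.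
by apply: nearW => M; rewrite sumEFin lee_fin; exact: sum_prob_not_at_goal_le.
Qed.

End execution.

Theorem theorem1 (d : measure_display) (Omega : measurableType d)
  (R : realType) (P : probability Omega R) (N : nat) (p : R)
  (X : nat -> Omega -> option 'I_N) (C : nat -> Omega -> bool) :
  (1 <= N)%N ->
  0 < p -> p <= 1 ->
  (* measurability of the discrete execution process *)
  (forall n o, measurable (X n @^-1` [set o])) ->
  (forall n, measurable [set w | C n w]) ->
  (* the goal is absorbing *)
  (forall n w, X n w = None -> X n.+1 w = None) ->
  (* a controlled transition of o_i advances to o_{i+1} (or to L_G) *)
  (forall n w i, X n w = Some i -> C n w -> X n.+1 w = next_op i) ->
  (* (an uncontrolled transition may jump anywhere: no constraint) *)
  (* each run of an operator ends in a controlled transition with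
     probability >= p, conditionally on any execution history *)
  (forall n x c i, x n = Some i ->
     (p%:E * P (history_event X C n x c)
        <= P (history_event X C n x c `&` [set w | C n w]))%E) ->
  (* conclusions *)
  P [set w | exists n, X n w = None] = 1%E /\
  (forall k : nat,
     ((1 - (1 - p ^+ N) ^+ k.+1)%:E
        <= P [set w | exists n, X n w = None /\ (unc_count C n w <= k)%N])%E) /\
  (\int[P]_w hitting_time R X w <= (N%:R / p ^+ N)%:E)%E.
Proof.
move=> N_gt0 p_gt0 p_le1 mX mC absorbing next controlled.
split; [|split => [k|]].
- exact: (prob_eventually_at_goal p_gt0 p_le1 mX mC absorbing next controlled).
- exact: (prob_reach_goal_unc p_gt0 p_le1 mX mC absorbing next controlled).
- exact: (expected_hitting_time_le p_gt0 p_le1 mX mC absorbing next controlled N_gt0).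
Qed.
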